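(* Let $X\in\mathbb{R}^{n\times p}$ be a fixed matrix with rows $X_1^\top,\dots,X_n^\top$ and nonzero columns $V_1,\dots,V_p$, let $\beta\in\mathbb{R}^p$, let $\epsilon$ be a random vector in $\mathbb{R}^n$, and let $D\subset\mathbb{R}^p$. Let $G:\mathbb{R}^n\to\mathbb{R}$ be a function, and let $\psi=(\psi_1,\dots,\psi_n)$, $\varphi=(\varphi_1,\dots,\varphi_n)$ with each $\psi_i,\varphi_i:\mathbb{R}\to\mathbb{R}$. Fix $q\in(0,1)$ and $c_0>0$. Suppose: (i) there is $c_1>0$ such that $$\Pr\Big\{|\langle \epsilon,\varphi(Xv)-\varphi(X\beta)\rangle|\le c_1\sqrt{n}\,\|v-\beta\|_1 \text{ for all } v\in D\Big\}\ge 1-c_0q;$$ (ii) there is $c_3>0$ such that $G(\psi(z)-\psi(X\beta))\ge c_3\|z-X\beta\|_2^2$ for all $z\in\{Xv: v\in D\}$. Define $$\mu_X=\max_{1\le i<j\le p}\frac{|V_i^\top V_j|}{\|V_i\|_2\|V_j\|_2},\quad a_X=\min_{1\le i\le p}\frac{\|V_i\|_2^2}{n},\quad b_X=\max_{1\le i\le p}\frac{\|V_i\|_2^2}{n},$$ and suppose $a_X+b_X\mu_X>6b_X|\mathrm{spt}(\beta)|\mu_X$. Fix $\tau>0$ such that $$a_X+b_X\mu_X>2b_X(3+4\tau)|\mathrm{spt}(\beta)|\mu_X,$$ and let $c_r=2(1+1/\tau)c_1\sqrt{n}$ and $$\kappa_r=\frac{3(2+1/\tau)\sqrt{2+(1+2\tau)^2}}{a_X+b_X\mu_X}\cdot\frac{c_1}{c_3}.$$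 If $\hat\beta\in D$ is a random variable that always satisfies $$G(\psi(X\hat\beta)-\psi(X\beta))\le 2|\langle\epsilon,\varphi(X\hat\beta)-\varphi(X\beta)\rangle| - c_r(\|\hat\beta\|_1-\|\beta\|_1),$$ then $$\Pr\Big\{\|\hat\beta-\beta\|_2\le \kappa_r\sqrt{|\mathrm{spt}(\beta)|/n}\Big\}\ge 1-c_0q.$$
   Context: For functions $g_1,\dots,g_n:\mathbb{R}\to\mathbb{R}$, $g=(g_1,\dots,g_n)$ and $x\in\mathbb{R}^n$, write $g(x)=(g_1(x_1),\dots,g_n(x_n))^\top$. For $v\in\mathbb{R}^p$, $\|v\|_a$ is the $\ell_a$-norm, and $\mathrm{spt}(v)=\{i: v_i\neq 0\}$ is the support of $v$, with $|\mathrm{spt}(v)|$ its cardinality. $\langle\cdot,\cdot\rangle$ is the Euclidean inner product on $\mathbb{R}^n$. *)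

From HB Require Import structures.
From mathcomp Require Import all_boot all_order all_algebra.
From mathcomp Require Import all_classical all_reals all_analysis.
Set Implicit Arguments. Unset Strict Implicit. Unset Printing Implicit Defensive.
Import Order.TTheory GRing.Theory Num.Theory.
Local Open Scope ring_scope.

Definition capp (R : realType) (n : nat) (g : 'I_n -> R -> R) (x : 'cV[R]_n)
  : 'cV[R]_n := \col_i g i (x i 0).

Definition inner (R : realType) (n : nat) (a b : 'cV[R]_n) : R :=
  \sum_i a i 0 * b i 0.

Definition norm1 (R : realType) (n : nat) (v : 'cV[R]_n) : R :=
  \sum_i `|v i 0|.

Definition norm2 (R : realType) (n : nat) (v : 'cV[R]_n) : R :=
  Num.sqrt (\sum_i v i 0 ^+ 2).

Definition spt_card (R : realType) (n : nat) (v : 'cV[R]_n) : nat :=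
  #|[set i | v i 0 != 0]|.

(* mu_X = max_{i<j} |V_i^T V_j| / (||V_i|| ||V_j||)  (0 if p < 2) *)
Definition muX (R : realType) (n p : nat) (X : 'M[R]_(n, p)) : R :=
  \big[Num.max/0]_(i < p) \big[Num.max/0]_(j < p | (i < j)%N)
     (`|inner (col i X) (col j X)| / (norm2 (col i X) * norm2 (col j X))).

Definition bX (R : realType) (n p : nat) (X : 'M[R]_(n, p)) : R :=
  \big[Num.max/0]_(i < p) (norm2 (col i X) ^+ 2 / n%:R).

(* a_X = min_i ||V_i||^2 / n  (the seed b_X does not affect the min for p >= 1) *)
Definition aX (R : realType) (n p : nat) (X : 'M[R]_(n, p)) : R :=
  \big[Num.min/bX X]_(i < p) (norm2 (col i X) ^+ 2 / n%:R).

(* Write [h = betahat - beta] and [S = spt beta]. On the event of (i), assumption (ii)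
   and the basic inequality give
     [c3 |Xh|_2^2 <= 2 c1 sqrt n ((2 + 1/tau) |h_S|_1 - (1/tau) |h_S^c|_1)],
   so [h] lies in the cone [|h_S^c|_1 <= (1 + 2 tau) |h_S|_1]. The Gram matrix of [X] has
   diagonal entries at least [n a_X] and off-diagonal entries at most [n b_X mu_X] in
   absolute value; on the cone and under the coherence assumption this yields
   [|Xh|_2^2 >= n (a_X + b_X mu_X) lam |h|_2^2] with [lam = (1 + 2r)/(r^2 + 4r + 2)],
   [r = 1 + 2 tau]. Together with [|h_S|_1 <= sqrt |S| |h|_2] this bounds [|h|_2]. *)

From HB Require Import structures.
From mathcomp Require Import all_boot all_order all_algebra.
From mathcomp Require Import all_classical all_reals all_analysis.
From mathcomp Require Import ring lra.
Set Implicit Arguments. Unset Strict Implicit. Unset Printing Implicit Defensive.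
Import Order.TTheory GRing.Theory Num.Theory.
Local Open Scope ring_scope.

Section InnerProduct.
Variables (R : realType) (n : nat).
Implicit Types a b : 'cV[R]_n.

Lemma innerC a b : inner a b = inner b a.
Proof. by apply: eq_bigr => i _; rewrite mulrC. Qed.

Lemma norm2_sqr a : norm2 a ^+ 2 = inner a a.
Proof.
rewrite sqr_sqrtr; last by apply: sumr_ge0 => i _; rewrite sqr_ge0.
by apply: eq_bigr => i _; rewrite expr2.
Qed.

Lemma norm2_ge0 a : 0 <= norm2 a.
Proof. exact: sqrtr_ge0. Qed.

Lemma norm2_gt0 a : a != 0 -> 0 < norm2 a.
Proof.
move=> a_neq0; rewrite sqrtr_gt0 lt_def sumr_ge0 ?andbT => [|i _]; last exact: sqr_ge0.
apply: contra a_neq0; rewrite psumr_eq0 => [/allP a0|i _]; last exact: sqr_ge0.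
apply/eqP/matrixP => i j; rewrite (ord1 j) mxE.
by apply/eqP; rewrite -sqrf_eq0; exact: a0 (mem_index_enum i).
Qed.

Lemma norm2_sqrD a b :
  norm2 (a + b) ^+ 2 = norm2 a ^+ 2 + 2%:R * inner a b + norm2 b ^+ 2.
Proof.
rewrite !norm2_sqr /inner mulr_sumr -!big_split /=.
by apply: eq_bigr => i _; rewrite !mxE; ring.
Qed.

Lemma norm1_ge0 a : 0 <= norm1 a.
Proof. by apply: sumr_ge0 => i _; exact: normr_ge0. Qed.

End InnerProduct.

Lemma sqr_sum_le_card (R : realFieldType) (I : finType) (S : {set I}) (a : I -> R) :
  (\sum_(i in S) a i) ^+ 2 <= #|S|%:R * \sum_(i in S) a i ^+ 2.
Proof.
have two_gt0 : 0 < 2%:R :> R by rewrite ltr0n.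
rewrite -(ler_pM2l two_gt0).
have -> : 2%:R * (\sum_(i in S) a i) ^+ 2 = \sum_(i in S) \sum_(j in S) 2%:R * (a i * a j).
  rewrite expr2 mulr_suml mulr_sumr; apply: eq_bigr => i _.
  by rewrite !mulr_sumr; apply: eq_bigr => j _; ring.
have <- : \sum_(i in S) \sum_(j in S) (a i ^+ 2 + a j ^+ 2) =
    2%:R * (#|S|%:R * \sum_(i in S) a i ^+ 2).
  under eq_bigr do rewrite big_split /= sumr_const.
  by rewrite big_split /= sumrMnl sumr_const -mulr_natl; ring.
apply: ler_sum => i _; apply: ler_sum => j _.
by have := sqr_ge0 (a i - a j); rewrite sqrrB; lra.
Qed.

Definition restrict_cV (R : pzRingType) (p : nat) (S : {set 'I_p}) (v : 'cV[R]_p) :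
  'cV[R]_p := \col_i (if i \in S then v i 0 else 0).

Section Restriction.
Variables (R : realType) (p : nat) (S : {set 'I_p}).
Implicit Types v : 'cV[R]_p.

Lemma restrict_cV_split v : v = restrict_cV S v + restrict_cV (~: S) v.
Proof.
apply/matrixP => i j; rewrite (ord1 j) !mxE inE.
by case: (i \in S); rewrite ?addr0 ?add0r.
Qed.

Lemma restrict_cV_setC_mul v i : restrict_cV S v i 0 * restrict_cV (~: S) v i 0 = 0.
Proof. by rewrite !mxE inE; case: (i \in S); rewrite ?mulr0 ?mul0r. Qed.

Lemma norm1_restrict_cV (T : {set 'I_p}) v :
  norm1 (restrict_cV T v) = \sum_(i in T) `|v i 0|.
Proof.
rewrite [RHS]big_mkcond; apply: eq_bigr => i _.
by rewrite mxE; case: (i \in T); rewrite ?normr0.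
Qed.

Lemma norm2_restrict_cV_sqr (T : {set 'I_p}) v :
  norm2 (restrict_cV T v) ^+ 2 = \sum_(i in T) v i 0 ^+ 2.
Proof.
rewrite sqr_sqrtr; last by apply: sumr_ge0 => i _; exact: sqr_ge0.
rewrite [RHS]big_mkcond; apply: eq_bigr => i _.
by rewrite mxE; case: (i \in T); rewrite ?expr0n.
Qed.

Lemma norm1_restrict_cV_split v :
  norm1 v = norm1 (restrict_cV S v) + norm1 (restrict_cV (~: S) v).
Proof.
rewrite !norm1_restrict_cV /norm1 (bigID (mem S)) /=.
by congr (_ + _); apply: eq_bigl => i; rewrite inE.
Qed.

Lemma norm2_restrict_cV_sqr_split v :
  norm2 v ^+ 2 = norm2 (restrict_cV S v) ^+ 2 + norm2 (restrict_cV (~: S) v) ^+ 2.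
Proof.
rewrite !norm2_restrict_cV_sqr sqr_sqrtr; last by apply: sumr_ge0 => i _; exact: sqr_ge0.
rewrite (bigID (mem S)) /=.
by congr (_ + _); apply: eq_bigl => i; rewrite inE.
Qed.

Lemma norm2_restrict_cV_le v : norm2 (restrict_cV S v) <= norm2 v.
Proof.
rewrite -ler_sqr ?nnegrE ?norm2_ge0 // (norm2_restrict_cV_sqr_split v).
by rewrite lerDl sqr_ge0.
Qed.

Lemma norm1_restrict_cV_le v :
  norm1 (restrict_cV S v) <= Num.sqrt #|S|%:R * norm2 (restrict_cV S v).
Proof.
rewrite -ler_sqr ?nnegrE ?norm1_ge0 ?mulr_ge0 ?sqrtr_ge0 ?norm2_ge0 //.
rewrite exprMn sqr_sqrtr // norm2_restrict_cV_sqr norm1_restrict_cV.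
have -> : \sum_(i in S) v i 0 ^+ 2 = \sum_(i in S) `|v i 0| ^+ 2.
  by apply: eq_bigr => i _; rewrite real_normK ?num_real.
exact: sqr_sum_le_card.
Qed.

Lemma norm1_restrict_cV_setC_le (beta h : 'cV[R]_p) :
  (forall i, i \notin S -> beta i 0 = 0) ->
  norm1 (restrict_cV (~: S) h) - norm1 (restrict_cV S h) <= norm1 (beta + h) - norm1 beta.
Proof.
move=> beta0; rewrite !norm1_restrict_cV addrC /norm1 -sumrB [X in _ <= X](bigID (mem S)) /=.
apply: lerD.
  rewrite -sumrN; apply: ler_sum => i _; rewrite mxE.
  by have := ler_normD (beta i 0 + h i 0) (- h i 0); rewrite normrN addrK; lra.
rewrite (eq_bigl (fun i => i \notin S)) => [|i]; last by rewrite inE.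
by apply: ler_sum => i iS; rewrite mxE beta0 // add0r normr0 subr0.
Qed.

End Restriction.

Section Coherence.
Variables (R : realType) (n p : nat) (X : 'M[R]_(n, p)).

Lemma muX_ge0 : 0 <= muX X.
Proof.
apply: (big_ind (fun x => 0 <= x)) => // [x y x0 y0|i _]; first by rewrite le_max x0.
apply: (big_ind (fun x => 0 <= x)) => // [x y x0 y0|j _]; first by rewrite le_max x0.
by rewrite divr_ge0 ?mulr_ge0 ?norm2_ge0.
Qed.

Lemma bX_ge0 : 0 <= bX X.
Proof.
apply: (big_ind (fun x => 0 <= x)) => // [x y x0 y0|i _]; first by rewrite le_max x0.
by rewrite divr_ge0 ?sqr_ge0.
Qed.

(* With no rows, [x / 0 = 0] makes [aX X] and [bX X] vanish. *)
Lemma dim_gt0_of_aX_bX : 0 < aX X + bX X * muX X -> (0 < n)%N.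
Proof.
rewrite lt0n; apply: contraTneq => n0.
have term0 i : norm2 (col i X) ^+ 2 / n%:R = 0 by rewrite [in n%:R]n0 invr0 mulr0.
have bX0 : bX X = 0.
  by apply: (big_ind (fun x => x = 0)) => // x y -> ->; rewrite maxxx.
have aX0 : aX X = 0.
  by rewrite /aX bX0; apply: (big_ind (fun x => x = 0)) => // x y -> ->; rewrite minxx.
by rewrite aX0 bX0 mul0r addr0 ltxx.
Qed.

Lemma inner_mulmx (y z : 'cV[R]_p) :
  inner (X *m y) (X *m z) =
  \sum_i \sum_j y i 0 * z j 0 * inner (col i X) (col j X).
Proof.
transitivity (\sum_k \sum_i \sum_j y i 0 * z j 0 * (X k i * X k j)).
  apply: eq_bigr => k _; rewrite !mxE mulr_suml; apply: eq_bigr => i _.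
  by rewrite mulr_sumr; apply: eq_bigr => j _; ring.
rewrite exchange_big; apply: eq_bigr => i _.
rewrite exchange_big; apply: eq_bigr => j _.
by rewrite mulr_sumr; apply: eq_bigr => k _; rewrite !mxE; ring.
Qed.

Hypothesis n_gt0 : (0 < n)%N.
Hypothesis colX_neq0 : forall j, col j X != 0.

Lemma norm2_col_sqr_le i : norm2 (col i X) ^+ 2 <= n%:R * bX X.
Proof. by rewrite mulrC -ler_pdivrMr ?ltr0n //; exact: le_bigmax_cond. Qed.

Lemma norm2_col_sqr_ge i : n%:R * aX X <= norm2 (col i X) ^+ 2.
Proof. by rewrite mulrC -ler_pdivlMr ?ltr0n //; exact: bigmin_le_cond. Qed.

Lemma inner_col_le i j : i != j ->
  `|inner (col i X) (col j X)| <= n%:R * bX X * muX X.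
Proof.
wlog ij : i j / (i < j)%N => [hwlog|_].
  rewrite neq_ltn => /orP[ij|ji]; first exact: hwlog ij (negbT (ltn_eqF ij)).
  by rewrite innerC; exact: hwlog ji (negbT (ltn_eqF ji)).
pose N k := norm2 (col k X).
have NN_gt0 : 0 < N i * N j by rewrite mulr_gt0 ?norm2_gt0.
have coh : `|inner (col i X) (col j X)| <= muX X * (N i * N j).
  rewrite -ler_pdivrMr //; apply: le_trans (le_bigmax_cond _ _ (isT : true)).
  exact: (le_bigmax_cond _ (fun j => _)).
apply: le_trans coh _; rewrite mulrC ler_wpM2r ?muX_ge0 //.
have := norm2_col_sqr_le i; have := norm2_col_sqr_le j.
by have := sqr_ge0 (N i - N j); rewrite sqrrB /N; lra.
Qed.

Lemma mul_inner_col_ge i j (a b : R) : i != j ->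
  - (n%:R * bX X * muX X * (`|a| * `|b|)) <= a * b * inner (col i X) (col j X).
Proof.
move=> ij; rewrite lerNl; apply: le_trans (ler_norm _) _; rewrite normrN.
by rewrite !normrM mulrC ler_wpM2r ?mulr_ge0 ?inner_col_le.
Qed.

Lemma norm2_mulmx_sqr_ge v :
  n%:R * (aX X + bX X * muX X) * norm2 v ^+ 2 - n%:R * bX X * muX X * norm1 v ^+ 2
    <= norm2 (X *m v) ^+ 2.
Proof.
set M := n%:R * bX X * muX X.
have -> : n%:R * (aX X + bX X * muX X) * norm2 v ^+ 2 =
    \sum_i \sum_j (if i == j then (n%:R * aX X + M) * (v i 0 * v j 0) else 0).
  rewrite norm2_sqr /inner mulr_sumr; apply: eq_bigr => i _.
  rewrite (bigD1 i) //= eqxx big1 => [|j /negPf]; last by rewrite eq_sym => ->.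
  by rewrite addr0 /M; ring.
have -> : M * norm1 v ^+ 2 = \sum_i \sum_j M * (`|v i 0| * `|v j 0|).
  rewrite expr2 /norm1 mulr_suml mulr_sumr; apply: eq_bigr => i _.
  by rewrite !mulr_sumr.
rewrite norm2_sqr inner_mulmx -sumrB; apply: ler_sum => i _.
rewrite -sumrB; apply: ler_sum => j _.
case: eqVneq => [<-|ij]; last by rewrite sub0r mul_inner_col_ge.
rewrite -normrM -expr2 ger0_norm ?sqr_ge0 // -norm2_sqr -mulrBl addrK mulrC.
by rewrite ler_wpM2l ?norm2_col_sqr_ge ?sqr_ge0.
Qed.

Lemma inner_mulmx_ge (y z : 'cV[R]_p) : (forall i, y i 0 * z i 0 = 0) ->
  - (n%:R * bX X * muX X * (norm1 y * norm1 z)) <= inner (X *m y) (X *m z).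
Proof.
move=> yz0; set M := n%:R * bX X * muX X.
have -> : M * (norm1 y * norm1 z) = \sum_i \sum_j M * (`|y i 0| * `|z j 0|).
  rewrite /norm1 mulr_suml mulr_sumr; apply: eq_bigr => i _.
  by rewrite !mulr_sumr.
rewrite inner_mulmx -sumrN; apply: ler_sum => i _; rewrite -sumrN; apply: ler_sum => j _.
case: (eqVneq i j) => [<-|ij]; last exact: mul_inner_col_ge.
rewrite yz0 mul0r oppr_le0 !mulr_ge0 ?bX_ge0 ?muX_ge0 //.
Qed.

Lemma norm2_mulmx_sqrD_ge (lam : R) (y z : 'cV[R]_p) :
  0 <= lam <= 1 -> (forall i, y i 0 * z i 0 = 0) ->
  n%:R * (aX X + bX X * muX X) * (norm2 y ^+ 2 + lam * norm2 z ^+ 2)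
   - n%:R * bX X * muX X * (norm1 y ^+ 2 + 2%:R * (norm1 y * norm1 z) + lam * norm1 z ^+ 2)
    <= norm2 (X *m (y + z)) ^+ 2.
Proof.
move=> /andP[lam_ge0 lam_le1] yz0.
have Qy := norm2_mulmx_sqr_ge y.
have Qyz := inner_mulmx_ge yz0.
(* [|Xz|^2] dominates both [0] and its coherence lower bound. *)
have Qz : lam * (n%:R * (aX X + bX X * muX X) * norm2 z ^+ 2
                  - n%:R * bX X * muX X * norm1 z ^+ 2) <= norm2 (X *m z) ^+ 2.
  have [b_ge0|b_lt0] := lerP 0 (n%:R * (aX X + bX X * muX X) * norm2 z ^+ 2
                                  - n%:R * bX X * muX X * norm1 z ^+ 2).
    by apply: le_trans (norm2_mulmx_sqr_ge z); rewrite ler_piMl.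
  by apply: le_trans (sqr_ge0 _); rewrite mulr_ge0_le0 // ltW.
rewrite mulmxDr norm2_sqrD; lra.
Qed.

Lemma norm2_mulmx_sqr_cone_ge (S : {set 'I_p}) (r : R) (h : 'cV[R]_p) :
  0 <= r ->
  2%:R * (1 + 2%:R * r) * bX X * muX X * #|S|%:R <= aX X + bX X * muX X ->
  norm1 (restrict_cV (~: S) h) <= r * norm1 (restrict_cV S h) ->
  n%:R * (aX X + bX X * muX X) * ((1 + 2%:R * r) / (r ^+ 2 + 4%:R * r + 2%:R))
    * norm2 h ^+ 2 <= norm2 (X *m h) ^+ 2.
Proof.
move=> r_ge0 coh cone.
set y := restrict_cV S h; set z := restrict_cV (~: S) h.
set u := norm1 y; set w := norm1 z; set c := 1 + 2%:R * r.
set lam := c / (r ^+ 2 + 4%:R * r + 2%:R).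
set nA := n%:R * (aX X + bX X * muX X); set M := n%:R * bX X * muX X.
have den_gt0 : 0 < r ^+ 2 + 4%:R * r + 2%:R by have := sqr_ge0 r; lra.
have lam_ge0 : 0 <= lam by rewrite divr_ge0 // /c; lra.
have lam_le1 : lam <= 1 by rewrite ler_pdivrMr // mul1r /c; have := sqr_ge0 r; lra.
(* [lam] is chosen so that the cone constant [c + lam r^2] equals [2 c (1 - lam)]. *)
have lam_id : c + lam * r ^+ 2 = 2%:R * c * (1 - lam).
  by rewrite /lam /c; field; rewrite gt_eqF.
have u_ge0 : 0 <= u := norm1_ge0 y.
have w_ge0 : 0 <= w := norm1_ge0 z.
have uw : u * w <= r * u ^+ 2 by rewrite expr2 mulrCA ler_wpM2l.
have ww : w ^+ 2 <= r ^+ 2 * u ^+ 2 by rewrite -exprMn ler_sqr ?nnegrE ?mulr_ge0.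
have uy : u ^+ 2 <= #|S|%:R * norm2 y ^+ 2.
  rewrite -[#|S|%:R]sqr_sqrtr // -exprMn ler_sqr ?nnegrE ?norm1_ge0 //.
    exact: norm1_restrict_cV_le.
  by rewrite mulr_ge0 ?sqrtr_ge0 ?norm2_ge0.
have M_ge0 : 0 <= M by rewrite !mulr_ge0 ?bX_ge0 ?muX_ge0.
have cMs : 2%:R * c * (M * #|S|%:R) <= nA.
  have -> : 2%:R * c * (M * #|S|%:R) =
      n%:R * (2%:R * c * bX X * muX X * #|S|%:R) by rewrite /M; ring.
  by rewrite ler_wpM2l ?ler0n.
have quad : M * (u ^+ 2 + 2%:R * (u * w) + lam * w ^+ 2) <= M * (2%:R * c * (1 - lam)) * u ^+ 2.
  rewrite -mulrA -lam_id ler_wpM2l //.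
  by have := ler_wpM2l lam_ge0 ww; rewrite /c; lra.
have lam1_ge0 : 0 <= 1 - lam by rewrite subr_ge0.
have K_ge0 : 0 <= M * (2%:R * c * (1 - lam)).
  by rewrite mulr_ge0 // mulr_ge0 // mulr_ge0 ?ler0n // /c; lra.
have := ler_wpM2l K_ge0 uy.
have := ler_wpM2r (mulr_ge0 lam1_ge0 (sqr_ge0 (norm2 y))) cMs.
have lam01 : 0 <= lam <= 1 by rewrite lam_ge0 lam_le1.
have := norm2_mulmx_sqrD_ge lam01 (restrict_cV_setC_mul S h).
rewrite -restrict_cV_split (norm2_restrict_cV_sqr_split S h) -/y -/z -/u -/w -/nA -/M.
lra.
Qed.

End Coherence.

(* Compares [2 / lam] with the constant [3 sqrt (2 + r^2)] of the statement. *)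
Lemma cone_constant_le (R : realType) (r : R) : 0 <= r ->
  2%:R * (r ^+ 2 + 4%:R * r + 2%:R) <= 3%:R * Num.sqrt (2%:R + r ^+ 2) * (1 + 2%:R * r).
Proof.
move=> r_ge0; have r2_ge0 := sqr_ge0 r.
have lhs_ge0 : 0 <= 2%:R * (r ^+ 2 + 4%:R * r + 2%:R) by lra.
have rhs_ge0 : 0 <= 3%:R * Num.sqrt (2%:R + r ^+ 2) * (1 + 2%:R * r).
  by rewrite !mulr_ge0 ?sqrtr_ge0 ?ler0n //; lra.
rewrite -ler_sqr ?nnegrE //.
rewrite !exprMn sqr_sqrtr ?addr_ge0 ?ler0n // -subr_ge0.
have -> : 3%:R ^+ 2 * (2%:R + r ^+ 2) * (1 + 2%:R * r) ^+ 2 -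
    2%:R ^+ 2 * (r ^+ 2 + 4%:R * r + 2%:R) ^+ 2 =
    32%:R * r ^+ 4 + 4%:R * r ^+ 3 + r ^+ 2 + 8%:R * r + 2%:R by ring.
by rewrite !addr_ge0 ?mulr_ge0 ?exprn_ge0 ?ler0n.
Qed.

Lemma le_div_of_sqr_le (R : realFieldType) (a b x : R) :
  0 < a -> 0 <= b -> 0 <= x -> a * x ^+ 2 <= b * x -> x <= b / a.
Proof.
move=> a_gt0 b_ge0 x_ge0; rewrite ler_pdivlMr //.
have [->|x_neq0] := eqVneq x 0; first by rewrite mul0r.
have x_gt0 : 0 < x by rewrite lt_def x_neq0.
by move=> ax2_le; rewrite mulrC -(ler_pM2r x_gt0) -mulrA -expr2.
Qed.

Section ErrorBound.
Variables (R : realType) (n p : nat) (X : 'M[R]_(n, p)) (beta h : 'cV[R]_p).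
Variables (c1 c3 tau : R).
Hypothesis colX_neq0 : forall j, col j X != 0.
Hypotheses (c1_gt0 : 0 < c1) (c3_gt0 : 0 < c3) (tau_gt0 : 0 < tau).
Hypothesis coherence : 2%:R * bX X * (3%:R + 4%:R * tau) * (spt_card beta)%:R * muX X
  < aX X + bX X * muX X.
Hypothesis basic_ineq :
  c3 * norm2 (X *m h) ^+ 2 <= 2%:R * (c1 * Num.sqrt n%:R * norm1 h)
    - (2%:R * (1 + tau^-1) * c1 * Num.sqrt n%:R) * (norm1 (beta + h) - norm1 beta).

Let S := [set i | beta i 0 != 0].
Let r := 1 + 2%:R * tau.
Let A := aX X + bX X * muX X.
Let lam := (1 + 2%:R * r) / (r ^+ 2 + 4%:R * r + 2%:R).

Let r_ge0 : 0 <= r. Proof. by rewrite addr_ge0 ?mulr_ge0 // ltW. Qed.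

Let A_gt0 : 0 < A.
Proof.
have c_ge0 : 0 <= 3%:R + 4%:R * tau by have := tau_gt0; lra.
by apply: le_lt_trans coherence; rewrite !mulr_ge0 ?bX_ge0 ?muX_ge0 ?ler0n.
Qed.

Let n_gt0 : (0 < n)%N := dim_gt0_of_aX_bX A_gt0.

Let lam_gt0 : 0 < lam.
Proof. by rewrite divr_gt0 //; have := sqr_ge0 r; have := r_ge0; lra. Qed.

Lemma basic_ineq_restrict_cV :
  c3 * norm2 (X *m h) ^+ 2 <= 2%:R * c1 * Num.sqrt n%:R *
    ((2%:R + tau^-1) * norm1 (restrict_cV S h) - tau^-1 * norm1 (restrict_cV (~: S) h)).
Proof.
apply: le_trans basic_ineq _; rewrite (norm1_restrict_cV_split S h).
have beta0 i : i \notin S -> beta i 0 = 0 by rewrite inE negbK => /eqP.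
have K_ge0 : 0 <= (1 + tau^-1) * (c1 * Num.sqrt n%:R).
  by rewrite !mulr_ge0 ?sqrtr_ge0 ?addr_ge0 ?invr_ge0 // ltW.
have := ler_wpM2l K_ge0 (norm1_restrict_cV_setC_le h beta0).
set u := norm1 (restrict_cV S h); set w := norm1 (restrict_cV (~: S) h); lra.
Qed.

Lemma restrict_cV_cone :
  norm1 (restrict_cV (~: S) h) <= (1 + 2%:R * tau) * norm1 (restrict_cV S h).
Proof.
set u := norm1 (restrict_cV S h); set w := norm1 (restrict_cV (~: S) h).
have K_gt0 : 0 < 2%:R * c1 * Num.sqrt n%:R by rewrite !mulr_gt0 ?sqrtr_gt0 ?ltr0n ?n_gt0.
have : 0 <= (2%:R + tau^-1) * u - tau^-1 * w.
  rewrite -(pmulr_rge0 _ K_gt0); apply: le_trans basic_ineq_restrict_cV.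
  by rewrite mulr_ge0 ?sqr_ge0 // ltW.
move=> /(mulr_ge0 (ltW tau_gt0)); rewrite mulrBr !mulrA mulrDr mulfV ?gt_eqF //; lra.
Qed.

Lemma norm2_mulmx_sqr_lasso_ge : n%:R * A * lam * norm2 h ^+ 2 <= norm2 (X *m h) ^+ 2.
Proof.
apply: (norm2_mulmx_sqr_cone_ge n_gt0 colX_neq0 r_ge0 _ restrict_cV_cone).
by have := ltW coherence; rewrite /spt_card -/S /r; lra.
Qed.

Lemma lasso_sqr_le :
  c3 * (n%:R * A * lam) * norm2 h ^+ 2 <=
    2%:R * c1 * Num.sqrt n%:R * (2%:R + tau^-1) * Num.sqrt (spt_card beta)%:R * norm2 h.
Proof.
rewrite -mulrA; apply: le_trans (ler_wpM2l (ltW c3_gt0) norm2_mulmx_sqr_lasso_ge) _.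
apply: le_trans basic_ineq_restrict_cV _.
have u_le : norm1 (restrict_cV S h) <= Num.sqrt (spt_card beta)%:R * norm2 h.
  apply: le_trans (norm1_restrict_cV_le S h) _.
  by rewrite ler_wpM2l ?sqrtr_ge0 ?norm2_restrict_cV_le.
have t_ge0 : 0 <= tau^-1 by rewrite invr_ge0 ltW.
have K_ge0 : 0 <= 2%:R * c1 * Num.sqrt n%:R by rewrite !mulr_ge0 ?ler0n // ltW.
have := mulr_ge0 K_ge0 (mulr_ge0 t_ge0 (norm1_ge0 (restrict_cV (~: S) h))).
have := ler_wpM2l K_ge0 (ler_wpM2l (addr_ge0 (ler0n R 2) t_ge0) u_le).
lra.
Qed.

Lemma lasso_constant_le :
  2%:R * c1 * Num.sqrt n%:R * (2%:R + tau^-1) * Num.sqrt (spt_card beta)%:R <=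
    (3%:R * (2%:R + tau^-1) * Num.sqrt (2%:R + r ^+ 2) / A * (c1 / c3))
      * Num.sqrt ((spt_card beta)%:R / n%:R) * (c3 * (n%:R * A * lam)).
Proof.
have m_gt0 : 0 < Num.sqrt n%:R :> R by rewrite sqrtr_gt0 ltr0n n_gt0.
rewrite sqrtrM ?ler0n // sqrtrV ?ler0n //.
set m := Num.sqrt n%:R; set W := Num.sqrt (2%:R + r ^+ 2).
have -> : n%:R = m ^+ 2 by rewrite sqr_sqrtr ?ler0n.
set F := c1 * m * (2%:R + tau^-1) * Num.sqrt (spt_card beta)%:R.
have -> : 3%:R * (2%:R + tau^-1) * W / A * (c1 / c3) * (Num.sqrt (spt_card beta)%:R / m) *
    (c3 * (m ^+ 2 * A * lam)) = F * (3%:R * W * lam).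
  by rewrite /F; field; rewrite !gt_eqF.
rewrite [X in X <= _](_ : _ = F * 2%:R); last by rewrite /F; ring.
have F_ge0 : 0 <= F.
  by rewrite !mulr_ge0 ?sqrtr_ge0 ?addr_ge0 ?invr_ge0 ?ler0n ?ltW.
rewrite ler_wpM2l // /lam mulrA ler_pdivlMr; last by have := sqr_ge0 r; have := r_ge0; lra.
exact: cone_constant_le.
Qed.

Lemma lasso_error_bound :
  norm2 h <= (3%:R * (2%:R + tau^-1) * Num.sqrt (2%:R + (1 + 2%:R * tau) ^+ 2)
                / (aX X + bX X * muX X) * (c1 / c3)) * Num.sqrt ((spt_card beta)%:R / n%:R).
Proof.
have P_gt0 : 0 < c3 * (n%:R * A * lam).
  by rewrite mulr_gt0 // mulr_gt0 ?lam_gt0 // mulr_gt0 ?A_gt0 ?ltr0n ?n_gt0.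
have b_ge0 : 0 <= 2%:R * c1 * Num.sqrt n%:R * (2%:R + tau^-1) * Num.sqrt (spt_card beta)%:R.
  by rewrite !mulr_ge0 ?sqrtr_ge0 ?addr_ge0 ?invr_ge0 ?ler0n ?ltW.
apply: le_trans (le_div_of_sqr_le P_gt0 b_ge0 (norm2_ge0 h) lasso_sqr_le) _.
by rewrite ler_pdivrMr //; exact: lasso_constant_le.
Qed.

End ErrorBound.

Local Open Scope classical_set_scope.

Theorem proposition2p2 (R : realType) (d : measure_display) (T : measurableType d)
  (P : probability T R) (n p : nat) (X : 'M[R]_(n, p)) (beta : 'cV[R]_p)
  (eps : T -> 'cV[R]_n) (D : set 'cV[R]_p) (G : 'cV[R]_n -> R)
  (psi phi : 'I_n -> R -> R) (q c0 c1 c3 tau : R) (betahat : T -> 'cV[R]_p) :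
  (forall j : 'I_p, col j X != 0) ->
  0 < q < 1 -> 0 < c0 ->
  (* (i) *)
  0 < c1 ->
  measurable [set w | forall v, D v ->
     `|inner (eps w) (capp phi (X *m v) - capp phi (X *m beta))|
       <= c1 * Num.sqrt n%:R * norm1 (v - beta)] ->
  (P [set w | (forall v, D v ->
     `|inner (eps w) (capp phi (X *m v) - capp phi (X *m beta))|
       <= c1 * Num.sqrt n%:R * norm1 (v - beta))%R] >= (1 - c0 * q)%:E)%E ->
  (* (ii) *)
  0 < c3 ->
  (forall v, D v ->
     G (capp psi (X *m v) - capp psi (X *m beta))
       >= c3 * norm2 (X *m v - X *m beta) ^+ 2) ->
  aX X + bX X * muX X > 6%:R * bX X * (spt_card beta)%:R * muX X ->
  0 < tau ->
  aX X + bX X * muX X > 2%:R * bX X * (3%:R + 4%:R * tau) * (spt_card beta)%:R * muX X ->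
  (forall w, D (betahat w)) ->
  (forall w,
     G (capp psi (X *m betahat w) - capp psi (X *m beta))
       <= 2%:R * `|inner (eps w) (capp phi (X *m betahat w) - capp phi (X *m beta))|
          - (2%:R * (1 + tau^-1) * c1 * Num.sqrt n%:R)
              * (norm1 (betahat w) - norm1 beta)) ->
  measurable [set w | norm2 (betahat w - beta)
      <= (3%:R * (2%:R + tau^-1) * Num.sqrt (2%:R + (1 + 2%:R * tau) ^+ 2)
            / (aX X + bX X * muX X) * (c1 / c3))
         * Num.sqrt ((spt_card beta)%:R / n%:R)] ->
  (P [set w | (norm2 (betahat w - beta)
      <= (3%:R * (2%:R + tau^-1) * Num.sqrt (2%:R + (1 + 2%:R * tau) ^+ 2)
            / (aX X + bX X * muX X) * (c1 / c3))
         * Num.sqrt ((spt_card beta)%:R / n%:R))%R] >= (1 - c0 * q)%:E)%E.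
Proof.
move=> colX_neq0 _ _ c1_gt0 mes_noise noise_bound c3_gt0 G_ge _ tau_gt0 coherence
  betahat_D basic_ineq mes_error.
apply: le_trans noise_bound (le_measure _ _ _ _); rewrite ?inE // => w /= noise_w.
apply: lasso_error_bound => //.
have := G_ge _ (betahat_D w); have := basic_ineq w; have := noise_w _ (betahat_D w).
by rewrite -mulmxBr [beta + _]addrC subrK; lra.
Qed.
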